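(* For every $n\ge 1$, the map $\Lambda_{\mathrm{poset}}$ is a bijection from $\mathcal{P}_n$ to $\mathcal{T}_n$, and its inverse is $\Xi_{\mathrm{poset}}$. (In particular $\Lambda_{\mathrm{poset}}(\Xi_{\mathrm{poset}}(T))=T$ for every $T\in\mathcal{T}_n$.)
   Context: For a finite set $S=\{x_1<\dots<x_n\}\subset\mathbb{R}$, define the partial order $\preceq_S$ on $[n]=\{1,\dots,n\}$ by $i\prec_S j$ iff $x_i+1<x_j$. A finite poset is a unit interval poset if it is isomorphic to $([n],\preceq_S)$ for some such $S$ (called a starting set). $\mathcal{P}_n$ denotes the set of unit interval posets with $n$ elements, up to isomorphism. A plane tree is either a single node, or a root node joined to a finite ordered (left-to-right) sequence of plane trees whose roots are its children; $\mathcal{T}_n$ is the set of plane trees with $n$ non-root nodes. The depth $d(u)$ of a node is its distance to the root. Map $\Lambda_{\mathrm{poset}}$: given $P=([n],\preceq_S)$ with $S=\{x_1<\dots<x_n\}$, set $x_0=x_1-2$ and build a tree with nodes $v_0,\dots,v_n$, root $v_0$, where for $i\in[n]$ the parent of $v_i$ is $v_j$ with $j\in\{0,\dots,n\}$ the largest index such that $x_j+1<x_i$; children of the same node are ordered left to right by decreasing index. This tree depends only on $\preceq_S$, and $\Lambda_{\mathrm{poset}}(P)$ is this tree. Map $\Xi_{\mathrm{poset}}$: given $T\in\mathcal{T}_n$, let $m$ be the maximal number of children of a node of $T$; for a non-root node $u$ let $c(u)=i$ if $u$ is the $i$-th child of its parent counted from right to left; with $u_0=\text{root},u_1,\dots,u_{d(u)}=u$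 the root-to-$u$ path, set $x_u=d(u)+\sum_{i=1}^{d(u)}c(u_i)(m+2)^{-i}$. With $S=\{x_u: u \text{ non-root}\}$ (an $n$-element set), $\Xi_{\mathrm{poset}}(T)=([n],\preceq_S)$. *)

From HB Require Import structures.
From mathcomp Require Import all_boot all_order all_algebra.
From mathcomp Require Import reals.
Set Implicit Arguments. Unset Strict Implicit. Unset Printing Implicit Defensive.
Import Order.TTheory GRing.Theory Num.Theory.

Inductive ptree := Node of seq ptree.

Fixpoint ptsize (t : ptree) : nat :=
  let: Node ts := t in sumn [seq (ptsize u).+1 | u <- ts].

Fixpoint maxdeg (t : ptree) : nat :=
  let: Node ts := t in maxn (size ts) (foldr maxn 0%N [seq maxdeg u | u <- ts]).

Section UIP.
Variable R : realFieldType.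
Local Open Scope ring_scope.

(* A starting set S = {x_1 < ... < x_n} is represented by the strictly
   increasing list s = [:: x_1; ...; x_n]. *)
Definition starting (n : nat) (s : seq R) : Prop :=
  size s = n /\ sorted <%R s.

(* the order <=_S on [n] (element i+1 of [n] is index i : 'I_n) *)
Definition uip_le (s : seq R) (i j : nat) : bool :=
  (i == j) || (nth 0 s i + 1 < nth 0 s j).

Definition uip_iso (n : nat) (s s' : seq R) : Prop :=
  exists f : 'I_n -> 'I_n, bijective f /\
    forall i j : 'I_n, uip_le s i j = uip_le s' (f i) (f j).

Definition xs (s : seq R) (i : nat) : R :=
  if i is i'.+1 then nth 0 s i' else head 0 s - 2.

Definition parent (s : seq R) (i : nat) : nat :=
  (\max_(j < (size s).+1 | (xs s j + 1 < xs s i)%R) (j : nat))%N.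

(* subtree rooted at v_j; children ordered left to right by decreasing index.
   [fuel] bounds the depth (size s + 1 suffices, as parent i < i). *)
Fixpoint build (s : seq R) (fuel j : nat) : ptree :=
  if fuel is f.+1 then
    Node [seq build s f i | i <- rev [seq i <- iota 1 (size s) | parent s i == j]]
  else Node [::].

Definition Lambda (s : seq R) : ptree := build s (size s).+1 0.

(* values x_u of all non-root nodes of the subtree t, whose root is at
   depth d and has partial sum acc = sum_{i<=d} c(u_i) (m+2)^{-i} *)
Fixpoint xi_vals (m : R) (d : nat) (acc : R) (t : ptree) : seq R :=
  let: Node ts := t in
  let k := size ts in
  (fix aux (l : seq ptree) (j : nat) : seq R :=
     match l with
     | [::] => [::]
     | u :: l' =>
       (* u is the (j+1)-th child from the left, i.e. the (k-j)-th from the right *)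
       let acc' := acc + (k - j)%:R * (m + 2) ^- d.+1 in
       ((d.+1)%:R + acc') :: xi_vals m d.+1 acc' u ++ aux l' j.+1
     end) ts 0%N.

Definition Xi (T : ptree) : seq R :=
  sort <=%R (xi_vals (maxdeg T)%:R 0 0 T).

End UIP.

From mathcomp Require Import all_boot all_order all_algebra.
From mathcomp Require Import reals.
From mathcomp Require Import ring lra zify.
Set Implicit Arguments. Unset Strict Implicit. Unset Printing Implicit Defensive.
Import Order.TTheory GRing.Theory Num.Theory.

(* - A starting set s = x_1 < ... < x_n is encoded by its parent function:
     x_a + 1 < x_b iff a + 1 <= parent s (b + 1).  So starting sets with the
     same parent function give the same poset and the same tree Lambda s.
   - Conversely, the rank #(strict downset) - #(strict upset) of a point is
     preserved by poset isomorphisms and is nondecreasing along a starting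
     set; hence an isomorphism between two starting sets may be replaced by
     the identity, the two starting sets have the same strict order, and the
     same parent function: Lambda is well defined on isomorphism classes.
   - The nodes of a plane tree are coded by their addresses (the positions,
     counted from the right, along the path from the root), and Xi(T) is the
     sorted list of the values |a| + sum_i a_i (m+2)^-i of these addresses.
     These values are injective, and the parent of a node in Xi(T) is the node
     at the address with the last letter removed; hence Lambda(Xi(T)) = T.
   - For a starting set s, the vertex v_i of Lambda(s) gets an address whose
     value increases with i, so Xi(Lambda(s)) has the same parent function as
     s.  This gives both Xi(Lambda(s)) ~ s and the injectivity of Lambda. *)

Section ParentFunction.
Variable R : realFieldType.
Variable s : seq R.
Hypothesis s_sorted : sorted <%R s.
Local Open Scope ring_scope.

Let n := size s.

Lemma sorted_nth_le i j : (i <= j < n)%N -> nth 0 s i <= nth 0 s j.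
Proof.
case/andP=> ij jn; have := s_sorted; rewrite lt_sorted_uniq_le => /andP[_ sle].
by apply: (sorted_leq_nth le_trans lexx) => //; rewrite inE -/n; lia.
Qed.

Lemma xs_le i j : (i <= j <= n)%N -> xs s i <= xs s j.
Proof.
case: i => [|i]; case: j => [|j] //=.
  by move=> jn; have := @sorted_nth_le 0 j; rewrite nth0 jn => /(_ isT); lra.
by move=> ijn; apply: sorted_nth_le.
Qed.

Definition cand (i j : nat) : bool := xs s j + 1 < xs s i.

Lemma cand_root i : (0 < i <= n)%N -> cand i 0.
Proof. by case: i => // i /xs_le; rewrite /cand /= -nth0; lra. Qed.

Lemma cand_lt i j : (j <= n)%N -> cand i j -> (j < i)%N.
Proof.
move=> jn; rewrite /cand ltnNge; apply: contraTN => ij.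
by have := @xs_le i j; rewrite ij jn => /(_ isT); lra.
Qed.

Lemma cand_le i j j' : (j' <= j <= n)%N -> cand i j -> cand i j'.
Proof. by move/xs_le; rewrite /cand; lra. Qed.

Lemma cand_ge i i' j : (i <= i' <= n)%N -> cand i j -> cand i' j.
Proof. by move/xs_le; rewrite /cand; lra. Qed.

Lemma parent_spec i : (0 < i <= n)%N ->
  [/\ cand i (parent s i), (parent s i < i)%N &
      forall j, (j <= n)%N -> cand i j -> (j <= parent s i)%N].
Proof.
move=> iN.
have [j jP ej] : {j : 'I_n.+1 | j \in [pred j : 'I_n.+1 | cand i j] &
                  parent s i = j}.
  apply: eq_bigmax_cond.
  by apply/card_gt0P; exists ord0; rewrite inE; exact: cand_root.
rewrite ej; split=> [//||j' j'n j'P]; first exact: cand_lt (ltn_ord j) jP.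
rewrite -ej; pose j'' := Ordinal (j'n : (j' < n.+1)%N).
exact: (@leq_bigmax_cond _ _ (fun j : 'I_n.+1 => nat_of_ord j) j'').
Qed.

Lemma parent_lt i : (0 < i <= n)%N -> (parent s i < i)%N.
Proof. by case/parent_spec. Qed.

Lemma parent_mono i i' : (0 < i)%N -> (i <= i' <= n)%N ->
  (parent s i <= parent s i')%N.
Proof.
move=> i0 /andP[ii' i'n].
have [Pi ltPi _] := parent_spec (ltac:(lia) : (0 < i <= n)%N).
have [_ _ maxPi'] := parent_spec (ltac:(lia) : (0 < i' <= n)%N).
by apply: maxPi'; [lia | apply: cand_ge Pi; lia].
Qed.

Lemma lt1_parent a b : (a < n)%N -> (b < n)%N ->
  (nth 0 s a + 1 < nth 0 s b) = (a.+1 <= parent s b.+1)%N.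
Proof.
move=> an bn; have [Pb ltb maxPb] := parent_spec (ltac:(lia) : (0 < b.+1 <= n)%N).
apply/idP/idP => [ab|]; first by apply: maxPb; [lia | exact: ab].
by move=> le; apply: (@cand_le b.+1 (parent s b.+1) a.+1) Pb; lia.
Qed.

End ParentFunction.

Lemma nondecreasing_reindex n (g h : nat -> nat) (f : 'I_n -> 'I_n) :
  bijective f ->
  (forall i j, (i <= j < n)%N -> (g i <= g j)%N) ->
  (forall i j, (i <= j < n)%N -> (h i <= h j)%N) ->
  (forall i : 'I_n, g i = h (f i)) -> forall i, (i < n)%N -> g i = h i.
Proof.
move=> [f' ff' f'f] gmono hmono gfh.
have sorted_map (k : nat -> nat) :
    (forall i j, (i <= j < n)%N -> (k i <= k j)%N) -> sorted leq (map k (iota 0 n)).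
  move=> kmono; apply: (homo_sorted_in (P := [pred i | (i < n)%N]) (e := leq)).
  - by move=> i j _; rewrite inE => jn ij; apply: kmono; rewrite ij.
  - by apply/allP => i; rewrite mem_iota.
  - exact: iota_sorted.
have gh : perm_eq (map g (iota 0 n)) (map h (iota 0 n)).
  have -> : map g (iota 0 n) = map h (map val (map f (enum 'I_n))).
    by rewrite -val_enum_ord -!map_comp; apply: eq_map.
  rewrite -val_enum_ord; apply/perm_map/perm_map.
  apply: uniq_perm; rewrite ?(map_inj_uniq (can_inj ff')) ?enum_uniq //.
  by move=> i; rewrite mem_enum; apply/mapP; exists (f' i); rewrite ?mem_enum.
move=> i ilt; have := sorted_eq leq_trans anti_leq (sorted_map g gmono)
  (sorted_map h hmono) gh.
by move/(congr1 (nth 0%N ^~ i)); rewrite !(nth_map 0%N) ?size_iota ?nth_iota.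
Qed.

Section SameOrder.
Variable R : realFieldType.
Variable n : nat.
Local Open Scope ring_scope.

Definition lt1 (s : seq R) (a b : nat) : bool := nth 0 s a + 1 < nth 0 s b.

Lemma lt1_irr (s : seq R) a : lt1 s a a = false.
Proof. by apply/negbTE; rewrite -leNgt lerDl. Qed.

Lemma iso_of_parent (s s' : seq R) : starting n s -> starting n s' ->
  (forall i, (0 < i <= n)%N -> parent s i = parent s' i) -> uip_iso n s s'.
Proof.
move=> [sz ss] [sz' ss'] eqp; exists id; split; first by exists id.
move=> i j; rewrite /uip_le !lt1_parent ?sz ?sz' // eqp //.
by rewrite ltn_ord.
Qed.

Lemma parent_of_lt1 (s s' : seq R) : starting n s -> starting n s' ->
  (forall a b, (a < n)%N -> (b < n)%N -> lt1 s a b = lt1 s' a b) ->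
  forall i, (0 < i <= n)%N -> parent s i = parent s' i.
Proof.
move=> [sz ss] [sz' ss'] eqlt [//|i] iN; rewrite /parent sz sz'.
apply: eq_bigl => -[[|j] jn] /=.
  by rewrite -[LHS]/(cand s i.+1 0) -[RHS]/(cand s' i.+1 0) !cand_root ?sz ?sz'.
by apply: eqlt; lia.
Qed.

Lemma build_ext (s s' : seq R) : size s = size s' ->
  (forall i, (0 < i <= size s)%N -> parent s i = parent s' i) ->
  forall f j, build s f j = build s' f j.
Proof.
move=> sz eqp; elim=> [//|f IH] j /=; rewrite -sz; congr Node.
rewrite (@eq_in_filter _ _ (fun i => parent s' i == j)); last first.
  by move=> i; rewrite mem_iota => ir; rewrite eqp //; lia.
by apply: eq_map => i; rewrite IH.
Qed.

(* The rank #(strict downset) - #(strict upset), shifted by n, is an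
   invariant of poset isomorphisms which is monotone along a starting set. *)
Definition downset (s : seq R) (b : nat) : {set 'I_n} := [set a : 'I_n | lt1 s a b].
Definition upset (s : seq R) (a : nat) : {set 'I_n} := [set b : 'I_n | lt1 s a b].
Definition rank (s : seq R) (a : nat) : nat := #|downset s a| + (n - #|upset s a|).

Lemma sets_mono (s : seq R) a b : starting n s -> (a <= b < n)%N ->
  downset s a \subset downset s b /\ upset s b \subset upset s a.
Proof.
move=> [sz ss] abn; have := @sorted_nth_le _ _ ss a b; rewrite sz => /(_ abn).
by move=> sab; split; apply/subsetP => x; rewrite !inE /lt1; lra.
Qed.

Lemma card_set_ord (A : {set 'I_n}) : (#|A| <= n)%N.
Proof. by rewrite -[X in (_ <= X)%N]card_ord max_card. Qed.

Lemma rank_mono (s : seq R) a b : starting n s -> (a <= b < n)%N ->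
  (rank s a <= rank s b)%N.
Proof.
move=> st abn; have [/subset_leq_card sd /subset_leq_card su] := sets_mono st abn.
by have := card_set_ord (upset s a); rewrite /rank; lia.
Qed.

Lemma rank_sets (s : seq R) a b : starting n s -> (a < n)%N -> (b < n)%N ->
  rank s a = rank s b -> downset s a = downset s b /\ upset s a = upset s b.
Proof.
wlog ab : a b / (a <= b)%N.
  move=> W st an bn eab; have [le|lt] := leqP a b; first exact: W.
  by have [-> ->] := W b a (ltnW lt) st bn an (esym eab).
move=> st an bn; have [sd su] := sets_mono st (ltac:(lia) : (a <= b < n)%N).
have := subset_leq_card sd; have := subset_leq_card su.
have := card_set_ord (upset s a); have := card_set_ord (upset s b).
rewrite /rank => ? ? ? ? eab.
by split; apply/eqP; rewrite ?(eq_sym (upset s a)) eqEcard ?sd ?su; lia.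
Qed.

Lemma lt1_iso (s s' : seq R) (f : 'I_n -> 'I_n) : bijective f ->
  (forall i j : 'I_n, uip_le s i j = uip_le s' (f i) (f j)) ->
  forall a b : 'I_n, lt1 s a b = lt1 s' (f a) (f b).
Proof.
move=> /bij_inj finj eqle a b; have := eqle a b; rewrite /uip_le.
have [-> _|ab] := eqVneq a b; first by rewrite !lt1_irr.
have fab : f a != f b by rewrite (inj_eq finj).
by move: ab fab; rewrite -!val_eqE => /negbTE-> /negbTE->.
Qed.

Lemma rank_iso (s s' : seq R) (f : 'I_n -> 'I_n) : bijective f ->
  (forall i j : 'I_n, uip_le s i j = uip_le s' (f i) (f j)) ->
  forall a : 'I_n, rank s a = rank s' (f a).
Proof.
move=> fbij eqle a; have eqlt := lt1_iso fbij eqle; rewrite /rank.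
have -> : downset s a = f @^-1: downset s' (f a) by apply/setP=> x; rewrite !inE eqlt.
have -> : upset s a = f @^-1: upset s' (f a) by apply/setP=> x; rewrite !inE eqlt.
by rewrite !card_preimset //; exact: bij_inj.
Qed.

Lemma iso_lt1 (s s' : seq R) : starting n s -> starting n s' -> uip_iso n s s' ->
  forall a b, (a < n)%N -> (b < n)%N -> lt1 s a b = lt1 s' a b.
Proof.
move=> st st' [f [fbij eqle]] a b an bn.
have rk := rank_iso fbij eqle.
have rk_id : forall c : 'I_n, rank s' (f c) = rank s' c.
  move=> c; rewrite -rk.
  by apply: (nondecreasing_reindex fbij) => // i j; exact: rank_mono.
have [_ Ua] := rank_sets st' (ltn_ord _) an (rk_id (Ordinal an)).
have [Db _] := rank_sets st' (ltn_ord _) bn (rk_id (Ordinal bn)).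
rewrite -[a]/(val (Ordinal an)) -[b]/(val (Ordinal bn)) (lt1_iso fbij eqle).
have -> : lt1 s' (f (Ordinal an)) (f (Ordinal bn)) =
          (f (Ordinal bn) \in upset s' (f (Ordinal an))) by rewrite inE.
have -> : lt1 s' a b = (Ordinal an \in downset s' (Ordinal bn)) by rewrite inE.
by rewrite Ua -Db !inE.
Qed.

End SameOrder.

(* Plane trees are nested: induction needs the hypothesis on all subtrees. *)
Fixpoint all_trees (P : ptree -> Prop) (ts : seq ptree) : Prop :=
  if ts is t :: ts' then P t /\ all_trees P ts' else True.

Fixpoint ptree_ind_all (P : ptree -> Prop)
    (IH : forall ts, all_trees P ts -> P (Node ts)) (t : ptree) : P t :=
  let: Node ts := t in
  IH ts ((fix all_sub (l : seq ptree) : all_trees P l :=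
            if l is u :: l' then conj (ptree_ind_all IH u) (all_sub l') else I) ts).

Definition children (t : ptree) : seq ptree := let: Node ts := t in ts.
Definition deg (t : ptree) : nat := size (children t).

(* The address of a non-root node u is the word c(u_1) ... c(u_d) of the
   positions, counted from the right, along the path from the root to u.
   [addr_from f k l j] lists the addresses in the subtrees l, which are the
   children number j, j+1, ... (from the left) of a node with k children;
   [f] computes the addresses inside a subtree. *)
Fixpoint addr_from (f : ptree -> seq (seq nat)) (k : nat) (l : seq ptree) (j : nat)
    : seq (seq nat) :=
  if l is u :: l' then
    ([:: (k - j)%N] :: map (cons (k - j)%N) (f u)) ++ addr_from f k l' j.+1
  else [::].

Fixpoint addr (t : ptree) : seq (seq nat) :=
  let: Node ts := t in addr_from addr (size ts) ts 0.

Fixpoint subtree (t : ptree) (a : seq nat) : ptree :=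
  if a is c :: a' then subtree (nth (Node [::]) (children t) (deg t - c)) a' else t.

Lemma mem_addr_from f k l j (c : nat) (a : seq nat) :
  (c :: a \in addr_from f k l j) <->
  exists2 i, (i < size l)%N &
    (c = k - (j + i))%N /\ (a = [::] \/ a \in f (nth (Node [::]) l i)).
Proof.
elim: l j => [|u l IH] j /=; first by split=> // -[].
rewrite inE mem_cat; split.
  case/orP => [/eqP[-> ->]|/orP[/mapP[b bin [-> ->]]|/IH[i il [-> a_in]]]].
  - by exists 0%N; rewrite ?addn0; split; [|left].
  - by exists 0%N; rewrite ?addn0; split; [|right].
  - by exists i.+1; rewrite // addSnnS.
case=> -[|i] il [ec a_in].
  by rewrite ec addn0; case: a_in => [->|a_in]; rewrite ?eqxx // map_f ?orbT.
rewrite orbC; apply/orP; left; apply/orP; right.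
by apply/(IH j.+1); exists i; rewrite // addSnnS.
Qed.

Lemma nil_notin_addr t : [::] \notin addr t.
Proof.
case: t => ts /=; move: (size ts) 0%N; elim: ts => [//|u l IH] k j /=.
by rewrite inE mem_cat !negb_or IH andbT; apply/mapP => -[].
Qed.

Lemma mem_addr_cons ts (c : nat) (a : seq nat) :
  (c :: a \in addr (Node ts)) <->
  (0 < c <= size ts)%N /\ (a = [::] \/ a \in addr (nth (Node [::]) ts (size ts - c))).
Proof.
split.
  move/mem_addr_from => [i il [-> a_in]]; split; first lia.
  by have -> : (size ts - (size ts - (0 + i)) = i)%N by lia.
move=> [cts a_in]; apply/mem_addr_from; exists (size ts - c)%N; first by lia.
by split; first lia.
Qed.

Lemma mem_addr_rcons t (u : seq nat) (c : nat) :
  (rcons u c \in addr t) <-> (u = [::] \/ u \in addr t) /\ (0 < c <= deg (subtree t u))%N.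
Proof.
elim: u t => [|c0 u IH] [ts] /=.
  split; first by move/mem_addr_cons => [cts _]; split; first left.
  by move=> [_ cts]; apply/mem_addr_cons; split; last left.
split.
  move/mem_addr_cons => [c0ts [/eqP|/IH[u_in cdeg]]].
    by rewrite -size_eq0 size_rcons.
  by split=> //; right; apply/mem_addr_cons.
move=> [[//|/mem_addr_cons[c0ts u_in]] cdeg].
by apply/mem_addr_cons; split=> //; right; apply/IH.
Qed.

Lemma uniq_addr_from k l j : all_trees (fun t => uniq (addr t)) l ->
  (j + size l <= k)%N -> uniq (addr_from addr k l j).
Proof.
elim: l j => [//|u l IHl] j [Hu Hl] jl /=.
rewrite cat_uniq /= mem_cat negb_or IHl ?andbT //; last by move: jl => /=; lia.
rewrite (map_inj_uniq (fun x y => @congr1 _ _ behead (_ :: x) (_ :: y))) Hu.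
have -> : [:: k - j]%N \notin map (cons (k - j)%N) (addr u).
  by apply/mapP => -[b b_in [eb]]; rewrite -eb (negbTE (nil_notin_addr u)) in b_in.
have -> /= : [:: k - j]%N \notin addr_from addr k l j.+1.
  by apply/negP => /mem_addr_from[i il [ekj _]]; move: jl => /=; lia.
apply/hasP => -[x x_in /mapP[b _ ex]]; move: x_in; rewrite ex.
move=> /mem_addr_from[i il [ec _]].
by move: jl => /=; lia.
Qed.

Lemma uniq_addr t : uniq (addr t).
Proof. by elim/ptree_ind_all: t => ts IH; apply: uniq_addr_from. Qed.

Lemma size_addr t : size (addr t) = ptsize t.
Proof.
elim/ptree_ind_all: t => ts /=; move: (size ts) 0%N.
by elim: ts => [//|u l IHl] k j [Hu Hl] /=; rewrite size_cat /= size_map Hu IHl.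
Qed.

(* Keep [addr] folded: unfolding it under [/=] produces huge terms. *)
Arguments addr : simpl never.

Lemma subtree_rcons t a c : subtree t (rcons a c) =
  nth (Node [::]) (children (subtree t a)) (deg (subtree t a) - c).
Proof. by elim: a t => [//|c0 a IH] t /=. Qed.

Lemma foldr_maxn_ge (s : seq nat) x : x \in s -> (x <= foldr maxn 0 s)%N.
Proof.
elim: s => [//|y s IH] /=; rewrite inE => /orP[/eqP->|/IH le_xs].
  exact: leq_maxl.
exact: leq_trans le_xs (leq_maxr _ _).
Qed.

Lemma deg_subtree_le t a : (deg (subtree t a) <= maxdeg t)%N.
Proof.
elim: a t => [|c a IH] [ts] /=; first exact: leq_maxl.
apply: leq_trans (IH _) _; set i := (size ts - c)%N.
have [its|] := ltnP i (size ts); last by move=> ?; rewrite nth_default.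
rewrite (leq_trans _ (leq_maxr _ _)) // foldr_maxn_ge //.
by rewrite -(nth_map (Node [::]) 0%N) // mem_nth // size_map.
Qed.

Lemma addr_letters t a : a \in addr t -> all (fun c => 0 < c <= maxdeg t)%N a.
Proof.
elim/last_ind: a => [//|u c IH] /mem_addr_rcons [u_in /andP[c0 cdeg]].
rewrite all_rcons c0 (leq_trans cdeg (deg_subtree_le _ _)) /=.
by case: u_in => [->//|/IH].
Qed.

(* The height of a tree, which bounds the fuel needed by [build]. *)
Fixpoint height (t : ptree) : nat :=
  let: Node ts := t in foldr maxn 0 [seq (height u).+1 | u <- ts].

Lemma height_nth ts i : (i < size ts)%N ->
  (height (nth (Node [::]) ts i) < height (Node ts))%N.
Proof.
move=> its /=; apply: foldr_maxn_ge.
by rewrite -(nth_map (Node [::]) 0%N (fun u => (height u).+1)) // mem_nth // size_map.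
Qed.

Lemma height_le_size t : (height t <= ptsize t)%N.
Proof.
elim/ptree_ind_all: t => ts /=; elim: ts => [//|u l IH] /= [Hu Hl].
by rewrite geq_max ltnS (leq_trans Hu (leq_addr _ _)) (leq_trans (IH Hl)) ?leq_addl.
Qed.

Section AddressValue.
Variable R : realFieldType.
Variable m : nat.
Local Open Scope ring_scope.

(* Xi_poset gives the node with address a (in a tree of maximal degree m) the
   value |a| + sum_i a_i base^-i with base = m + 2: the integer part is the
   depth, and the letters are digits in base m + 2 of the fractional part. *)
Definition base : R := m%:R + 2.
Definition weight (k : nat) : R := 1 / base ^+ k.
Definition frac (a : seq nat) : R := \sum_(i < size a) (nth 0%N a i)%:R * weight i.+1.
Definition aval (a : seq nat) : R := (size a)%:R + frac a.
Definition admissible (a : seq nat) : bool := all (fun c => 0 < c <= m)%N a.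

Lemma base_gt1 : 1 < base.
Proof. by rewrite /base; have := ler0n R m; lra. Qed.

Lemma weight_gt0 k : 0 < weight k.
Proof. by rewrite divr_gt0 // exprn_gt0 // (lt_trans ltr01 base_gt1). Qed.

Lemma base_neq0 : base != 0.
Proof. by rewrite gt_eqF // (lt_trans ltr01 base_gt1). Qed.

Lemma weightD k l : weight (k + l) = weight k * weight l.
Proof. by rewrite /weight exprD; field; rewrite !expf_neq0 ?base_neq0. Qed.

Lemma weightS k : weight k = base * weight k.+1.
Proof. by rewrite -addn1 weightD /weight; field; rewrite expf_neq0 ?base_neq0. Qed.

Lemma frac_nil : frac [::] = 0.
Proof. by rewrite /frac big_ord0. Qed.

Lemma frac_rcons a c : frac (rcons a c) = frac a + c%:R * weight (size a).+1.
Proof.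
rewrite /frac size_rcons big_ord_recr /= nth_rcons ltnn eqxx; congr (_ + _).
by apply: eq_bigr => i _; rewrite nth_rcons ltn_ord.
Qed.

Lemma frac_cons c a : frac (c :: a) = (c%:R + frac a) * weight 1.
Proof.
rewrite /frac big_ord_recl /= mulrDl big_distrl /=; congr (_ + _).
apply: eq_bigr => i _; rewrite -mulrA; congr (_ * _).
by rewrite /bump /= add1n -addn1 weightD.
Qed.

Lemma frac_ge0 a : 0 <= frac a.
Proof. by apply: sumr_ge0 => i _; rewrite mulr_ge0 ?ler0n ?ltW ?weight_gt0. Qed.

Lemma admissible_rcons a c : admissible (rcons a c) = admissible a && (0 < c <= m)%N.
Proof. by rewrite /admissible all_rcons andbC. Qed.

Lemma letter_weight k c : (c <= m)%N ->
  c%:R * weight k.+1 + 2 * weight k.+1 <= weight k.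
Proof.
move=> cm; rewrite [weight k]weightS /base -mulrDl ler_pM2r ?weight_gt0 //.
by rewrite lerD2r ler_nat.
Qed.

Lemma frac_bound a : admissible a -> frac a <= 1 - weight (size a).
Proof.
elim/last_ind: a => [|a c IH]; first by rewrite frac_nil /weight expr0 divr1 subrr.
rewrite admissible_rcons frac_rcons size_rcons => /andP[adm /andP[_ cm]].
have := IH adm; have := letter_weight (size a) cm; have := weight_gt0 (size a).+1.
lra.
Qed.

Lemma aval_ge a : (size a)%:R <= aval a.
Proof. by rewrite /aval lerDl frac_ge0. Qed.

Lemma aval_lt a : admissible a -> aval a < (size a)%:R + 1.
Proof.
move=> adm; rewrite /aval ltrD2l; have := frac_bound adm.
by have := weight_gt0 (size a); lra.
Qed.

Lemma aval_lt_size a a' : admissible a -> (size a < size a')%N -> aval a < aval a'.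
Proof.
move=> adm lt; have := aval_lt adm; have := aval_ge a'.
by have := ler_nat R (size a).+1 (size a'); rewrite lt -addn1 natrD; lra.
Qed.

Lemma frac_gap a a' : admissible a -> admissible a' -> size a = size a' -> a != a' ->
  frac a + weight (size a) <= frac a' \/ frac a' + weight (size a) <= frac a.
Proof.
elim/last_ind: a a' => [|u c IH] a'; first by case: a' => // _ _ _; rewrite eqxx.
case/lastP: a' => [|u' c']; first by rewrite size_rcons.
rewrite !admissible_rcons !size_rcons !frac_rcons.
move=> /andP[adm /andP[_ cm]] /andP[adm' /andP[_ c'm]] [su] ne; rewrite su.
have w0 := weight_gt0 (size u').+1; set w := weight _ in w0 *.
have [eu|neu] := eqVneq u u'.
  have /eqP ncc : c != c' by apply: contra ne; rewrite eu => /eqP->.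
  have step d d' : (d < d')%N -> d%:R * w + w <= d'%:R * w.
    by move=> dd'; rewrite -[w in _ + w]mul1r -mulrDl ler_pM2r // natr1 ler_nat.
  have [lt|lt] : (c < c' \/ c' < c)%N by lia.
    by left; rewrite eu; have := step _ _ lt; lra.
  by right; rewrite eu; have := step _ _ lt; lra.
have := letter_weight (size u') cm; have := letter_weight (size u') c'm.
have := mulr_ge0 (ler0n R c) (ltW w0); have := mulr_ge0 (ler0n R c') (ltW w0).
by rewrite -/w; case: (IH u' adm adm' su neu); rewrite su; lra.
Qed.

Lemma aval_inj a a' : admissible a -> admissible a' -> aval a = aval a' -> a = a'.
Proof.
move=> adm adm' e.
have sz : size a = size a'.
  have [lt|gt|//] := ltngtP (size a) (size a').
    by have := aval_lt_size adm lt; rewrite e ltxx.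
  by have := aval_lt_size adm' gt; rewrite e ltxx.
apply/eqP; apply: contraT => ne; move: e; rewrite /aval sz => e.
by have := weight_gt0 (size a); case: (frac_gap adm adm' sz ne); lra.
Qed.

Lemma aval_rcons u c : aval (rcons u c) = aval u + 1 + c%:R * weight (size u).+1.
Proof. by rewrite /aval frac_rcons size_rcons -addn1 natrD; lra. Qed.

Lemma aval_parent u c : (0 < c)%N -> aval u + 1 < aval (rcons u c).
Proof.
move=> c0; rewrite aval_rcons ltrDl.
by rewrite mulr_gt0 ?weight_gt0 ?ltr0n.
Qed.

Lemma aval_parent_max u c w : admissible (rcons u c) -> admissible w -> w != [::] ->
  aval w + 1 < aval (rcons u c) -> w = u \/ aval w < aval u.
Proof.
rewrite admissible_rcons => /andP[adm /andP[c0 cm]] admw wn.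
have [lt|gt|eq] := ltngtP (size w) (size u).
- by right; apply: aval_lt_size.
- have := aval_lt (ltac:(by rewrite admissible_rcons adm c0 cm) : admissible (rcons u c)).
  have := ler_nat R (size u).+1 (size w); rewrite gt size_rcons.
  by have := aval_ge w; rewrite -addn1 natrD; lra.
have [->|ne] := eqVneq w u; first by left.
rewrite aval_rcons /aval eq => lt; right.
have := letter_weight (size u) cm; have := weight_gt0 (size u).+1.
have := frac_ge0 w; have := frac_ge0 u.
by case: (frac_gap admw adm eq ne); rewrite eq; lra.
Qed.

Lemma aval_rcons_mono u u' c c' : admissible u -> admissible u' ->
  (0 < c <= m)%N -> (0 < c' <= m)%N ->
  aval u < aval u' -> aval (rcons u c) < aval (rcons u' c').
Proof.
move=> adm adm' /andP[c0 cm] /andP[c0' c'm] lt.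
have [lts|gts|eqs] := ltngtP (size u) (size u').
- by apply: aval_lt_size; rewrite ?admissible_rcons ?adm ?c0 ?cm // !size_rcons.
- by have := aval_lt_size adm' gts; lra.
have ne : u != u' by apply: contraTneq lt => ->; rewrite ltxx.
rewrite !aval_rcons; move: lt; rewrite /aval eqs => lt.
have := letter_weight (size u') cm; have := weight_gt0 (size u').+1.
have := mulr_ge0 (ler0n R c') (ltW (weight_gt0 (size u').+1)).
by case: (frac_gap adm adm' eqs ne); rewrite eqs; lra.
Qed.

Lemma aval_rcons_letter u c c' : (c < c')%N -> aval (rcons u c) < aval (rcons u c').
Proof. by move=> lt; rewrite !aval_rcons ltrD2l ltr_pM2r ?weight_gt0 ?ltr_nat. Qed.

End AddressValue.

Section XiAddresses.
Variable R : realFieldType.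
Variable m : nat.
Local Open Scope ring_scope.

Lemma xi_vals_addr t d (acc : R) :
  xi_vals m%:R d acc t =
  [seq d%:R + acc + (size a)%:R + frac R m a * weight R m d | a <- addr t].
Proof.
elim/ptree_ind_all: t d acc => ts IH d acc.
rewrite /addr -/addr /=; set b := (m%:R + 2 : R); move: (size ts) 0%N.
elim: ts IH => [//|u l IHl] [Hu Hl] k j /=.
have wd : b ^- d.+1 = weight R m d * weight R m 1.
  by rewrite -weightD addn1 /weight div1r.
rewrite map_cat /= -map_comp IHl // Hu wd frac_cons frac_nil; congr (_ :: _ ++ _).
  by rewrite -natr1; ring.
have wS : weight R m d.+1 = weight R m d * weight R m 1 by rewrite -weightD addn1.
by apply: eq_map => a /=; rewrite wS frac_cons -!natr1; ring.
Qed.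

End XiAddresses.

Lemma Xi_addr (R : realFieldType) (T : ptree) :
  Xi R T = sort <=%R (map (aval R (maxdeg T)) (addr T)).
Proof.
rewrite /Xi xi_vals_addr; congr sort; apply: eq_map => a.
by rewrite /aval /weight expr0 divr1 mulr1 !add0r.
Qed.

Lemma sorted_index_lt (T : eqType) (lt : rel T) (s : seq T) x y :
  transitive lt -> irreflexive lt -> sorted lt s -> x \in s -> y \in s ->
  (index x s < index y s)%N = lt x y.
Proof.
move=> lt_tr lt_irr ss xs ys; apply/idP/idP; first exact: sorted_ltn_index.
move=> xy; case: ltngtP => // [yx|exy].
  by have := lt_tr _ _ _ xy (sorted_ltn_index lt_tr ss _ _ ys xs yx); rewrite lt_irr.
by move: xy; rewrite -(nth_index x xs) -(nth_index x ys) exy lt_irr.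
Qed.

Section LambdaXi.
Variable R : realFieldType.
Variable T : ptree.
Local Open Scope ring_scope.

Let m := maxdeg T.
Let S := Xi R T.
Let val (a : seq nat) : R := aval R m a.

Lemma admissible_addr a : a \in addr T -> admissible m a.
Proof. exact: addr_letters. Qed.

Lemma uniq_vals : uniq (map val (addr T)).
Proof.
rewrite map_inj_in_uniq ?uniq_addr // => a a' aT a'T.
by apply: aval_inj; apply: admissible_addr.
Qed.

Lemma Xi_sorted : sorted <%R S.
Proof. by rewrite /S Xi_addr sort_lt_sorted uniq_vals. Qed.

Lemma size_Xi : size S = ptsize T.
Proof. by rewrite /S Xi_addr size_sort size_map size_addr. Qed.

Lemma val_in_Xi a : a \in addr T -> val a \in S.
Proof. by move=> aT; rewrite /S Xi_addr mem_sort map_f. Qed.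

Definition label (a : seq nat) : nat :=
  if a == [::] then 0%N else (index (val a) S).+1.

Lemma addr_neq_nil a : a \in addr T -> a != [::].
Proof. by apply: contraTneq => ->; exact: nil_notin_addr. Qed.

Lemma label_addr a : a \in addr T ->
  [/\ (0 < label a)%N, (label a <= ptsize T)%N & xs S (label a) = val a].
Proof.
move=> aT; rewrite /label (negbTE (addr_neq_nil aT)) /= nth_index ?val_in_Xi //.
by rewrite -size_Xi index_mem val_in_Xi.
Qed.

Lemma label_lt a a' : a \in addr T -> a' \in addr T ->
  (label a < label a')%N = (val a < val a').
Proof.
move=> aT a'T; rewrite /label !(negbTE (addr_neq_nil _)) // ltnS.
by rewrite (sorted_index_lt lt_trans ltxx) ?val_in_Xi ?Xi_sorted.
Qed.

Lemma label_onto i : (0 < i <= ptsize T)%N -> exists2 a, a \in addr T & label a = i.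
Proof.
move=> iT; have : nth 0 S i.-1 \in S by rewrite mem_nth // size_Xi; lia.
rewrite {2}/S Xi_addr mem_sort => /mapP[a aT e]; exists a => //.
rewrite /label (negbTE (addr_neq_nil aT)) /val /m -e index_uniq ?size_Xi; try lia.
by have := Xi_sorted; rewrite lt_sorted_uniq_le => /andP[].
Qed.

Lemma label_inj a a' : (a = [::] \/ a \in addr T) -> (a' = [::] \/ a' \in addr T) ->
  label a = label a' -> a = a'.
Proof.
case=> [->|aT]; case=> [->|a'T] //.
- by have [+ _ _] := label_addr a'T => /[swap] <-.
- by have [+ _ _] := label_addr aT => /[swap] ->.
move=> e; have [lt|gt|eq] := ltgtP (val a) (val a').
- by move: lt; rewrite -label_lt // e ltnn.
- by move: gt; rewrite -label_lt // e ltnn.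
by apply: aval_inj eq; apply: admissible_addr.
Qed.

Lemma parent_label u c : rcons u c \in addr T -> parent S (label (rcons u c)) = label u.
Proof.
move=> vT; have [v0 vn xv] := label_addr vT.
have vS : (0 < label (rcons u c) <= size S)%N by rewrite size_Xi v0.
have [Pv ltv maxPv] := parent_spec Xi_sorted vS.
have [uT /andP[c0 _]] := proj1 (mem_addr_rcons T u c) vT.
apply/eqP; rewrite eqn_leq; apply/andP; split.
  have [->//|p0] := posnP (parent S (label (rcons u c))).
  have [w wT ew] := @label_onto (parent S (label (rcons u c))) (ltac:(lia)).
  move: Pv; rewrite /cand -ew xv; have [_ _ ->] := label_addr wT.
  case/(aval_parent_max (admissible_addr vT) (admissible_addr wT) (addr_neq_nil wT)).
    by move=> ->.
  case: uT => [->|uT]; last by move=> lt; rewrite ltnW // label_lt.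
  rewrite /val /aval frac_nil /= addr0.
  by have := frac_ge0 R m w; have := ler0n R (size w); lra.
apply: maxPv.
  by case: uT => [->|/label_addr[]]; rewrite ?size_Xi.
case: uT => [eu|uT].
  by move: vS; rewrite eu => vS; exact: (cand_root Xi_sorted vS).
by rewrite /cand xv; have [_ _ ->] := label_addr uT; exact: aval_parent.
Qed.


Lemma children_labels u : (u = [::] \/ u \in addr T) ->
  [seq i <- iota 1 (size S) | parent S i == label u] =
  [seq label (rcons u c) | c <- iota 1 (deg (subtree T u))].
Proof.
move=> uT; have childT c : (0 < c <= deg (subtree T u))%N -> rcons u c \in addr T.
  by move=> cdeg; apply/mem_addr_rcons.
apply: (irr_sorted_eq ltn_trans ltnn).
- exact/sorted_filter/iota_ltn_sorted/ltn_trans.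
- apply: (homo_sorted_in (P := [pred c | 0 < c <= deg (subtree T u)]%N));
    last exact: iota_ltn_sorted.
    move=> c c' /childT cT /childT c'T lt.
    by rewrite label_lt // aval_rcons_letter.
  by apply/allP => c; rewrite mem_iota inE; lia.
move=> i; rewrite mem_filter mem_iota; apply/idP/idP.
  case/andP => /eqP ep iS; have [|w wT ew] := @label_onto i; first by rewrite -size_Xi.
  case/lastP: w wT ew => [/addr_neq_nil//|u' c'] wT ew.
  have [u'T c'deg] := proj1 (mem_addr_rcons T u' c') wT.
  have eu : u' = u by apply: label_inj => //; rewrite -(parent_label wT) ew.
  by apply/mapP; exists c'; rewrite -?eu // mem_iota; lia.
move=> /mapP[c]; rewrite mem_iota => cdeg ->.
have cT := childT c (ltac:(lia)); have [c0 cn _] := label_addr cT.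
by rewrite parent_label // eqxx size_Xi; lia.
Qed.

Lemma rev_iota1 k : rev (iota 1 k) = [seq (k - j)%N | j <- iota 0 k].
Proof.
apply: (@eq_from_nth _ 0%N); first by rewrite size_rev size_map !size_iota.
move=> i; rewrite size_rev size_iota => ik.
by rewrite nth_rev ?size_iota // (nth_map 0%N) ?size_iota // !nth_iota //; lia.
Qed.

Lemma build_label f u : (u = [::] \/ u \in addr T) -> (height (subtree T u) < f)%N ->
  build S f (label u) = subtree T u.
Proof.
elim: f u => [//|f IH] u uT hf /=.
rewrite children_labels // -map_rev -map_comp rev_iota1 -map_comp.
case E: (subtree T u) hf => [ts] hf; rewrite /deg /=; congr Node.
rewrite -[RHS](mkseq_nth (Node [::])) /mkseq.
apply/eq_in_map => j; rewrite mem_iota => /andP[_ jts] /=.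
have cT : rcons u (size ts - j)%N \in addr T.
  by apply/mem_addr_rcons; split=> //; rewrite E /deg /=; lia.
have eT : subtree T (rcons u (size ts - j)%N) = nth (Node [::]) ts j.
  by rewrite subtree_rcons E /deg /=; congr nth; lia.
rewrite IH ?eT //; first by right.
by apply: leq_trans (height_nth _) _; [lia | rewrite -ltnS].
Qed.

Lemma Lambda_Xi : Lambda S = T.
Proof.
rewrite /Lambda -[0%N]/(label [::]) build_label //; first by left.
by rewrite size_Xi ltnS height_le_size.
Qed.

End LambdaXi.

Section XiLambda.
Variable R : realFieldType.
Variable s : seq R.
Hypothesis s_sorted : sorted <%R s.
Local Open Scope ring_scope.

Let n := size s.
Let T := Lambda s.

(* The children of v_j in Lambda(s), by increasing index (in the tree they
   appear in the reverse order), and the position of v_i among its siblings. *)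
Definition kids (j : nat) : seq nat := [seq i <- iota 1 n | parent s i == j].
Definition sibling_pos (i : nat) : nat := (index i (kids (parent s i))).+1.

Lemma kids_sorted j : sorted ltn (kids j).
Proof. exact/sorted_filter/iota_ltn_sorted/ltn_trans. Qed.

Lemma mem_kids j i : (i \in kids j) = (parent s i == j) && (0 < i <= n)%N.
Proof. by rewrite mem_filter mem_iota; congr (_ && _); lia. Qed.

Lemma kids_leaf j : (n <= j)%N -> kids j = [::].
Proof.
move=> nj; rewrite /kids -(filter_pred0 (iota 1 n)); apply: eq_in_filter => i.
rewrite mem_iota => iN; apply/negbTE/eqP => pij.
by have := parent_lt s_sorted (ltac:(lia) : (0 < i <= n)%N); lia.
Qed.

Lemma sibling_pos_le i : (0 < i <= n)%N -> (sibling_pos i <= size (kids (parent s i)))%N.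
Proof. by move=> iN; rewrite index_mem mem_kids eqxx. Qed.

Lemma nth_kids j c : (0 < c <= size (kids j))%N ->
  let i := nth 0%N (kids j) c.-1 in
  [/\ (0 < i <= n)%N, parent s i = j & sibling_pos i = c].
Proof.
case: c => [//|c] cj /=; set i := nth _ _ c; have : i \in kids j by apply: mem_nth.
rewrite mem_kids => /andP[/eqP pij iN]; split=> //.
by rewrite /sibling_pos pij index_uniq ?(sorted_uniq ltn_trans ltnn (kids_sorted j)).
Qed.

Lemma sibling_pos_lt i i' : (0 < i)%N -> (i < i' <= n)%N -> parent s i = parent s i' ->
  (sibling_pos i < sibling_pos i')%N.
Proof.
move=> i0 ii' pp; rewrite /sibling_pos pp ltnS.
by rewrite (sorted_index_lt ltn_trans ltnn (kids_sorted _)) ?mem_kids ?pp ?eqxx //; lia.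
Qed.

Lemma build_fuel f f' j : (n < f + j)%N -> (n < f' + j)%N -> build s f j = build s f' j.
Proof.
elim: f f' j => [|f IH] [|f'] j //= h h'; try by rewrite -/(kids j) kids_leaf //; lia.
congr Node; apply/eq_in_map => i; rewrite mem_rev -/(kids j) mem_kids.
case/andP=> /eqP pij iN; have := parent_lt s_sorted iN; rewrite pij => ji.
by apply: IH; lia.
Qed.

(* The address of v_i in Lambda(s): the address of its parent followed by
   its sibling position ([f] is fuel; f = i suffices since parent s i < i). *)
Fixpoint vaddr_fuel (f i : nat) : seq nat :=
  if f is f'.+1 then
    (if i is 0 then [::] else rcons (vaddr_fuel f' (parent s i)) (sibling_pos i))
  else [::].
Definition vaddr (i : nat) : seq nat := vaddr_fuel i i.

Lemma vaddr_fuel_enough f f' i : (i <= f)%N -> (i <= f')%N -> (i <= n)%N ->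
  vaddr_fuel f i = vaddr_fuel f' i.
Proof.
elim: f f' i => [|f IH] [|f'] [|i] //=; try by move=> *; lia.
move=> if_ if' iN; have := parent_lt s_sorted (ltac:(lia) : (0 < i.+1 <= n)%N).
by move=> lt; rewrite (IH f') //; lia.
Qed.

Lemma vaddrS i : (0 < i <= n)%N -> vaddr i = rcons (vaddr (parent s i)) (sibling_pos i).
Proof.
case: i => [//|i] iN; rewrite /vaddr /=; congr rcons.
by have := parent_lt s_sorted iN => lt; apply: vaddr_fuel_enough; lia.
Qed.

Definition subbuild (j : nat) : ptree := build s (n.+1 - j) j.

Lemma children_subbuild j : (j <= n)%N ->
  children (subbuild j) = map (build s (n - j)) (rev (kids j)).
Proof. by move=> jn; rewrite /subbuild subSn. Qed.

Lemma deg_subbuild j : (j <= n)%N -> deg (subbuild j) = size (kids j).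
Proof. by move=> jn; rewrite /deg children_subbuild // size_map size_rev. Qed.

Lemma subtree_vaddr i : (i <= n)%N -> subtree T (vaddr i) = subbuild i.
Proof.
elim/ltn_ind: i => i IH iN; have [->|i0] := posnP i; first by rewrite /subbuild subn0.
have iN' : (0 < i <= n)%N by rewrite i0.
have pi := parent_lt s_sorted iN'; have sp := sibling_pos_le iN'.
move: sp; rewrite /sibling_pos; set K := kids (parent s i) => sp.
rewrite vaddrS // subtree_rcons IH; try lia.
rewrite deg_subbuild ?children_subbuild /sibling_pos -/K; try lia.
rewrite (nth_map 0%N (Node [::])) ?size_rev; last lia.
rewrite nth_rev; last lia.
have -> : (size K - (size K - (index i K).+1).+1 = index i K)%N by lia.
by rewrite nth_index ?mem_kids ?eqxx //; apply: build_fuel; lia.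
Qed.


Lemma vaddr_in_addr i : (0 < i <= n)%N -> vaddr i \in addr T.
Proof.
elim/ltn_ind: i => i IH iN; have pi := parent_lt s_sorted iN.
rewrite vaddrS //; apply/mem_addr_rcons; split.
  by have [->|p0] := posnP (parent s i); [left | right; apply: IH; lia].
rewrite subtree_vaddr ?deg_subbuild; try lia.
by rewrite /sibling_pos /= index_mem mem_kids eqxx.
Qed.

Lemma addr_vaddr a : a \in addr T -> exists2 i, (0 < i <= n)%N & a = vaddr i.
Proof.
elim/last_ind: a => [|u c IH]; first by rewrite (negbTE (nil_notin_addr _)).
case/mem_addr_rcons => uT cdeg.
have [j jn eu] : exists2 j, (j <= n)%N & u = vaddr j.
  by case: uT => [->|/IH[j jn ->]]; [exists 0%N | exists j => //; lia].
move: cdeg; rewrite eu; rewrite subtree_vaddr // deg_subbuild // => /nth_kids[iN pij spi].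
by exists (nth 0%N (kids j) c.-1) => //; rewrite [RHS]vaddrS // pij spi.
Qed.

Let m := maxdeg T.
Let val (a : seq nat) : R := aval R m a.

Lemma admissible_vaddr i : (i <= n)%N -> admissible m (vaddr i).
Proof.
by have [->//|i0 iN] := posnP i; apply/admissible_addr/vaddr_in_addr; rewrite i0.
Qed.

(* The values of the addresses increase with the index: the root first, then
   by induction on the parents, using that parent s is monotone. *)
Lemma vaddr_mono i i' : (i < i' <= n)%N -> val (vaddr i) < val (vaddr i').
Proof.
elim/ltn_ind: i' i => i' IH i ii'.
have i'N : (0 < i' <= n)%N by lia.
have [->|i0] := posnP i.
  by rewrite (vaddrS i'N); apply: aval_lt_size; rewrite // size_rcons.
have iN : (0 < i <= n)%N by lia.
have := admissible_vaddr (ltac:(lia) : (i <= n)%N).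
have := admissible_vaddr (ltac:(lia) : (i' <= n)%N).
rewrite (vaddrS iN) (vaddrS i'N) !admissible_rcons => /andP[adm' spi'] /andP[adm spi].
have := parent_mono s_sorted i0 (ltac:(lia) : (i <= i' <= n)%N).
rewrite leq_eqVlt => /orP[/eqP pp|lt].
  by rewrite pp; apply: aval_rcons_letter; apply: sibling_pos_lt; lia.
have pi' := parent_lt s_sorted i'N.
by apply: aval_rcons_mono => //; apply: (IH (parent s i')) => //; rewrite lt /=; lia.
Qed.


Lemma perm_addr_vaddr : perm_eq (addr T) (map vaddr (iota 1 n)).
Proof.
apply: uniq_perm; rewrite ?uniq_addr //.
  rewrite map_inj_in_uniq ?iota_uniq // => i i'; rewrite !mem_iota => iN i'N e.
  by apply/eqP; apply: contraT; rewrite neq_ltn => /orP[] lt;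
    [have := @vaddr_mono i i' | have := @vaddr_mono i' i]; rewrite e ltxx; lia.
move=> a; apply/idP/mapP => [/addr_vaddr[i iN ->]|[i]]; last first.
  by rewrite mem_iota => iN ->; apply: vaddr_in_addr; lia.
by exists i; rewrite // mem_iota; lia.
Qed.

Lemma size_Lambda : ptsize T = n.
Proof. by rewrite -size_addr (perm_size perm_addr_vaddr) size_map size_iota. Qed.

Lemma sorted_vals : sorted <%R [seq val (vaddr i) | i <- iota 1 n].
Proof.
apply: (homo_sorted_in (P := [pred i | (i <= n)%N]) (e := ltn)).
- by move=> i i' _; rewrite inE => i'N ii'; apply: vaddr_mono; lia.
- by apply/allP => i; rewrite mem_iota inE; lia.
- exact: iota_ltn_sorted.
Qed.

Lemma Xi_Lambda : Xi R T = [seq val (vaddr i) | i <- iota 1 n].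
Proof.
rewrite Xi_addr (perm_sortP le_total le_trans le_anti _ _ (perm_map _ perm_addr_vaddr)).
rewrite -map_comp; apply: sorted_sort; first exact: le_trans.
by have := sorted_vals; rewrite lt_sorted_uniq_le => /andP[].
Qed.

Lemma label_vaddr i : (0 < i <= n)%N -> label R T (vaddr i) = i.
Proof.
move=> iN; rewrite /label (negbTE (addr_neq_nil (vaddr_in_addr iN))) Xi_Lambda.
have -> : aval R (maxdeg T) (vaddr i) = nth 0 [seq val (vaddr i) | i <- iota 1 n] i.-1.
  by rewrite (nth_map 0%N) ?size_iota ?nth_iota; try lia; congr (val (vaddr _)); lia.
rewrite index_uniq ?size_map ?size_iota; try lia.
by have := sorted_vals; rewrite lt_sorted_uniq_le => /andP[].
Qed.

Lemma parent_Xi_Lambda i : (0 < i <= n)%N -> parent (Xi R T) i = parent s i.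
Proof.
move=> iN; rewrite -{1}(label_vaddr iN) vaddrS // parent_label -?vaddrS ?vaddr_in_addr //.
have [->//|p0] := posnP (parent s i).
by apply: label_vaddr; have := parent_lt s_sorted iN; lia.
Qed.

End XiLambda.

Lemma Lambda_of_parent (R : realFieldType) n (s s' : seq R) :
  starting n s -> starting n s' ->
  (forall i, (0 < i <= n)%N -> parent s i = parent s' i) -> Lambda s = Lambda s'.
Proof.
move=> [sz _] [sz' _] eqp; rewrite /Lambda sz sz'.
by apply: build_ext; rewrite ?sz ?sz'.
Qed.

Theorem mainTheorem2 (R : realType) (n : nat) : (0 < n)%N ->
  (* Lambda_poset maps P_n into T_n *)
  (forall s : seq R, starting n s -> ptsize (Lambda s) = n) /\
  (* Lambda_poset is well defined on isomorphism classes *)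
  (forall s s' : seq R, starting n s -> starting n s' ->
     uip_iso n s s' -> Lambda s = Lambda s') /\
  (* Lambda_poset is injective on isomorphism classes *)
  (forall s s' : seq R, starting n s -> starting n s' ->
     Lambda s = Lambda s' -> uip_iso n s s') /\
  (* Xi_poset(T) is in P_n (S is an n-element set) and Lambda(Xi(T)) = T *)
  (forall T : ptree, ptsize T = n ->
     starting n (Xi R T) /\ Lambda (Xi R T) = T) /\
  (* Xi_poset(Lambda(P)) = P up to isomorphism *)
  (forall s : seq R, starting n s -> uip_iso n (Xi R (Lambda s)) s).
Proof.
move=> _.
have XiLambda_parent (s : seq R) : starting n s ->
    forall i, (0 < i <= n)%N -> parent (Xi R (Lambda s)) i = parent s i.
  by case=> sz ss i; rewrite -sz; exact: parent_Xi_Lambda.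
have Xi_starting T : ptsize T = n -> starting n (Xi R T).
  by move=> <-; split; [exact: size_Xi | exact: Xi_sorted].
have Lambda_size (s : seq R) : starting n s -> ptsize (Lambda s) = n.
  by case=> <- ss; exact: size_Lambda.
split; first exact: Lambda_size.
split.
  move=> s s' st st' iso; apply: (Lambda_of_parent st st').
  exact: parent_of_lt1 st st' (iso_lt1 st st' iso).
split.
  move=> s s' st st' eqL; apply: (iso_of_parent st st') => i iN.
  by rewrite -(XiLambda_parent s st i iN) -(XiLambda_parent s' st' i iN) eqL.
split; first by move=> T Tn; split; [exact: Xi_starting | exact: Lambda_Xi].
move=> s st; have st' := Xi_starting _ (Lambda_size s st).
by apply: (iso_of_parent st' st) => i iN; exact: XiLambda_parent.
Qed.
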